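(* Let $T,M,\delta,\tau$ be as in the setup, let $\xi>0$, $\varepsilon\in(0,1)$, $\eta\in(0,1)$ and an integer $J\ge1$. Consider the following randomized procedure (HybridPeel). Set $W_1=V_T$. For $i=1,\dots,J$, as long as $W_i\neq\emptyset$: random estimates $\hat C_i(w)\ge0$ for all $w\in W_i$ are produced; set $\hat\tau(W_i)=\frac1k\sum_{w\in W_i}\hat C_i(w)$, $L_i=\{w\in W_i:\hat C_i(w)\le k(1+\xi)\hat\tau(W_i)/|W_i|\}$ and $W_{i+1}=W_i\setminus L_i$. Then run the Greedy peeling procedure on $T[W_{J+1}]$ (if $W_{J+1}$ is nonempty): starting from $U_0=W_{J+1}$, repeatedly remove a vertex of minimum temporal motif degree $C_{U}(\cdot)$ in the current set $U$ (ties broken arbitrarily) until $k$ vertices remain, and let $W'$ be a set of maximum density $\rho$ among all sets visited in this phase. Output the set among the candidates $W_1,\dots,W_J$ (each scored by $\hat\tau(W_j)/|W_j|$) and $W'$ (scored by $\rho(W')$) with the largest score. Assume that for every $i\le J$, conditionally on everything before iteration $i$, the event $\{\,|\hat C_i(w)-C_{W_i}(w)|\le\varepsilon\,C_{W_i}(w)\text{ for all }w\in W_i\,\}$ has probability at least $1-\eta/J$. Then with probability at least $1-\eta$ the output $W$ satisfies $\rho(W)\ge\frac{(1-\varepsilon)^2}{k(1+\xi)(1+\varepsilon)^2}\mathrm{OPT}$ when $J\ge2$, and $\rho(W)\ge\frac{(1-\varepsilon)^2}{k(1+\xi)(1+\varepsilon)}\mathrm{OPT}$ when $J=1$.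
   Context: Setup. A temporal network is a pair $T=(V_T,E_T)$ where $V_T$ is a finite set of $n$ vertices and $E_T$ is a finite set of temporal edges $(u,v,t)$ with $u,v\in V_T$ and timestamp $t\in\mathbb{R}_{>0}$; timestamps are assumed distinct. A $k$-vertex $\ell$-edge temporal motif ($k,\ell\ge 2$) is a pair $M=(K,\sigma)$ where $K=(V_K,E_K)$ is a directed, weakly connected multigraph with $|V_K|=k$, $|E_K|=\ell$, and $\sigma$ is an ordering of $E_K$; equivalently $M$ is the sequence $\langle(x_1,y_1),\dots,(x_\ell,y_\ell)\rangle$ of its edges in the order $\sigma$. Given $\delta>0$, a $\delta$-instance of $M$ in a temporal network is a sequence $S=\langle(x'_1,y'_1,t'_1),\dots,(x'_\ell,y'_\ell,t'_\ell)\rangle$ of $\ell$ distinct temporal edges of that network with $t'_1<\dots<t'_\ell$ such that (1) there is a bijection $h$ from the set of vertices appearing in $S$ onto $V_K$ with $h(x'_i)=x_i$ and $h(y'_i)=y_i$ for all $i\in[\ell]$, and (2) $t'_\ell-t'_1\le\delta$. We write $v\in S$ if $v$ is an endpoint of some edge of $S$; every $\delta$-instance contains exactly $k$ vertices. For $W\subseteq V_T$, $T[W]=(W,\{(u,v,t)\in E_T:u,v\in W\})$ is the induced temporal subnetwork and $\mathcal{S}_W$ is the set of $\delta$-instances of $M$ in $T[W]$. A weighting function $\tau$ assigns a weight $\tau(S)>0$ to each $\delta$-instance $S$ of $M$ in $T$; for $W\subseteq V_T$, $\tau(W)=\sum_{S\in\mathcal{S}_W}\tau(S)$. The temporal motif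 degree of $v$ in $T[W]$ is $C_W(v)=\sum_{S\in\mathcal{S}_W:\,v\in S}\tau(S)$. The density of a nonempty $W\subseteq V_T$ is $\rho(W)=\tau(W)/|W|$, and $\mathrm{OPT}=\max_{\emptyset\ne W\subseteq V_T}\rho(W)$ is the optimal value of the Temporal Motif Densest Subnetwork (TMDS) problem. *)

From HB Require Import structures.
From mathcomp Require Import all_boot all_order all_algebra.
From mathcomp Require Import all_classical all_reals all_analysis.
Set Implicit Arguments.
Unset Strict Implicit.
Unset Printing Implicit Defensive.
Import Order.TTheory GRing.Theory Num.Theory.
Local Open Scope ring_scope.

(* Temporal network T = (V, E_T): vertex set is the finType V; the     *)
(* temporal edges are indexed by 'I_m : edge e is (src e, dst e, time e)*)
(* (distinct timestamps, i.e. time injective, is a hypothesis).        *)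
(* Motif M: vertex set 'I_k, edges (mx i, my i) for i : 'I_l in the    *)
(* order sigma.  A candidate delta-instance is a map s : 'I_l -> 'I_m   *)
(* (its i-th temporal edge is edge s i).                               *)

Section TMDS.
Variables (R : realType) (V : finType) (m : nat).
Variables (src dst : 'I_m -> V) (time : 'I_m -> R).
Variables (k l : nat) (mx my : 'I_l -> 'I_k) (delta : R).

Definition motif_adj : rel 'I_k :=
  fun a b => [exists i : 'I_l, ((mx i == a) && (my i == b)) ||
                               ((mx i == b) && (my i == a))].

Definition motif_weakly_connected : Prop :=
  forall a b : 'I_k, connect motif_adj a b.

Definition in_inst (s : {ffun 'I_l -> 'I_m}) (v : V) : bool :=
  [exists i : 'I_l, (src (s i) == v) || (dst (s i) == v)].

Definition is_instance (s : {ffun 'I_l -> 'I_m}) : Prop :=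
  [/\ (forall i j : 'I_l, (i < j)%N -> time (s i) < time (s j)),
      (exists h : V -> 'I_k,
         [/\ forall i : 'I_l, h (src (s i)) = mx i /\ h (dst (s i)) = my i,
             {in in_inst s &, injective h} &
             forall a : 'I_k, exists2 v, in_inst s v & h v = a]) &
      (forall i j : 'I_l, val i = 0%N -> val j = l.-1 ->
          time (s j) - time (s i) <= delta)].

Definition inst_in (W : {set V}) (s : {ffun 'I_l -> 'I_m}) : Prop :=
  is_instance s /\ (forall i : 'I_l, src (s i) \in W /\ dst (s i) \in W).

Variable tau : {ffun 'I_l -> 'I_m} -> R.

Definition tauW (W : {set V}) : R :=
  \sum_(s : {ffun 'I_l -> 'I_m} | `[< inst_in W s >]) tau s.

Definition Cdeg (W : {set V}) (v : V) : R :=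
  \sum_(s : {ffun 'I_l -> 'I_m} | `[< inst_in W s >] && in_inst s v) tau s.

Definition rho (W : {set V}) : R := tauW W / #|W|%:R.

(* OPT = max over nonempty W of rho W (all rho W >= 0, so 0 is a
   harmless initial value of the max) *)
Definition OPT : R := \big[Num.max/0]_(W : {set V} | W != finset.set0) rho W.

Variables (xi eps : R) (J : nat).

Definition tau_hat (W : {set V}) (e : V -> R) : R :=
  (k%:R)^-1 * \sum_(w in W) e w.

Definition Lset (W : {set V}) (e : V -> R) : {set V} :=
  [set w in W | e w <= k%:R * (1 + xi) * tau_hat W e / #|W|%:R].

(* est i = estimates hat C_i produced in iteration i (i >= 1).
   Wp est i = W_i for i >= 1  (Wp est 0 is an unused dummy). *)
Fixpoint Wp (est : nat -> V -> R) (i : nat) : {set V} :=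
  match i with
  | 0 => [set: V]
  | j.+1 => if j is 0 then [set: V] else Wp est j :\: Lset (Wp est j) (est j)
  end.

Definition score (est : nat -> V -> R) (j : nat) : R :=
  tau_hat (Wp est j) (est j) / #|Wp est j|%:R.

Definition greedy_step : rel {set V} :=
  fun U U' => (k < #|U|)%N &&
    [exists v in U, [forall u in U, Cdeg U v <= Cdeg U u] && (U' == U :\ v)].

Definition greedy_run (U0 : {set V}) (us : seq {set V}) : bool :=
  path greedy_step U0 us && (#|last U0 us| <= k)%N.

(* Wg = None  : W_{J+1} empty, Greedy not run;
   Wg = Some W' : W' is a maximum-density set visited by Greedy *)
Definition greedy_result (est : nat -> V -> R) (Wg : option {set V}) : Prop :=
  match Wg with
  | None => Wp est J.+1 = finset.set0
  | Some W' => Wp est J.+1 != finset.set0 /\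
      exists us, [/\ greedy_run (Wp est J.+1) us,
                     W' \in Wp est J.+1 :: us &
                     forall U, U \in Wp est J.+1 :: us -> rho U <= rho W']
  end.

(* W_j is an actual candidate: iteration j was executed *)
Definition iter_cand (est : nat -> V -> R) (j : nat) : Prop :=
  (1 <= j <= J)%N /\ Wp est j != finset.set0.

(* W is a possible output of HybridPeel given the estimates est
   (for some resolution of the ties) *)
Definition is_output (est : nat -> V -> R) (W : {set V}) : Prop :=
  exists Wg, greedy_result est Wg /\
    let ok (x : R) := (forall j, iter_cand est j -> score est j <= x) /\
                      (forall W', Wg = Some W' -> rho W' <= x) in
    (exists j, [/\ iter_cand est j, W = Wp est j & ok (score est j)]) \/
    (Wg = Some W /\ ok (rho W)).

Definition good_iter (est : nat -> V -> R) (i : nat) : Prop :=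
  forall w, w \in Wp est i ->
    `|est i w - Cdeg (Wp est i) w| <= eps * Cdeg (Wp est i) w.

End TMDS.

From HB Require Import structures.
From mathcomp Require Import all_boot all_order all_algebra.
From mathcomp Require Import all_classical all_reals all_analysis.
From mathcomp Require Import measurable_realfun ring lra.
Import Order.TTheory GRing.Theory Num.Theory.
Local Open Scope ring_scope.
Set Implicit Arguments.
Unset Strict Implicit.

(* Fix a densest set [Ws].  Every vertex of [Ws] has motif degree at least
   OPT in any superset of [Ws], because deleting it from [Ws] cannot raise the
   density.  Follow [Ws] through the run.  If some peeling iteration [i]
   removes a vertex of [Ws], its accurate estimate, at least (1-eps) OPT, lies
   below the threshold k (1+xi) tau_hat(W_i)/|W_i|, so the score of W_i is at
   least (1-eps) OPT/(k (1+xi)).  Otherwise [Ws] survives into W_{J+1} and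
   Greedy visits a set of density at least OPT/k: when it first deletes a
   vertex of [Ws] all degrees are at least OPT, and if it never does, it stops
   with at most k vertices containing [Ws].  Scores overestimate densities by
   at most a factor 1+eps, so the output has density at least
   (1-eps) OPT/(k (1+xi) (1+eps)).  By the union bound all J iterations are
   accurate with probability at least 1 - eta. *)

Lemma ler_sum_subpred (R : numDomainType) (I : finType) (P Q : pred I) (F : I -> R) :
  (forall i, P i -> Q i) -> (forall i, Q i -> 0 <= F i) ->
  \sum_(i | P i) F i <= \sum_(i | Q i) F i.
Proof.
move=> PQ F_ge0; rewrite [leRHS](bigID P) /=; apply: ler_wpDr.
  by apply: sumr_ge0 => i /andP[/F_ge0].
by under [leRHS]eq_bigl => i do rewrite (andb_idl (PQ i)).
Qed.

Section MotifDensity.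
Variables (R : realType) (V : finType) (m : nat).
Variables (src dst : 'I_m -> V) (time : 'I_m -> R).
Variables (k l : nat) (mx my : 'I_l -> 'I_k) (delta : R).
Variable tau : {ffun 'I_l -> 'I_m} -> R.
Hypothesis tau_gt0 : forall s, is_instance src dst time mx my delta s -> 0 < tau s.

Local Notation inst_in := (inst_in src dst time mx my delta).
Local Notation in_inst := (in_inst src dst).
Local Notation tauW := (tauW src dst time mx my delta tau).
Local Notation Cdeg := (Cdeg src dst time mx my delta tau).
Local Notation rho := (rho src dst time mx my delta tau).
Local Notation OPT := (OPT src dst time mx my delta tau).

Lemma inst_in_subset (W W' : {set V}) s : W \subset W' -> inst_in W s -> inst_in W' s.
Proof.
move=> /fintype.subsetP sWW' [inst_s edges_in]; split=> // i.
by have [] := edges_in i; split; apply: sWW'.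
Qed.

Lemma tau_inst_in_ge0 (W : {set V}) s : `[< inst_in W s >] -> 0 <= tau s.
Proof. by move=> /asboolP[/tau_gt0/ltW]. Qed.

Lemma tauW_ge0 (W : {set V}) : 0 <= tauW W.
Proof. by apply: sumr_ge0 => s /tau_inst_in_ge0. Qed.

Lemma rho_ge0 (W : {set V}) : 0 <= rho W.
Proof. by rewrite divr_ge0 ?tauW_ge0. Qed.

Lemma tauW_subset (W W' : {set V}) : W \subset W' -> tauW W <= tauW W'.
Proof.
move=> sWW'; apply: ler_sum_subpred => [s|s /tau_inst_in_ge0 //].
by move=> /asboolP/(inst_in_subset sWW')/asboolP.
Qed.

Lemma Cdeg_subset (W W' : {set V}) v : W \subset W' -> Cdeg W v <= Cdeg W' v.
Proof.
move=> sWW'; apply: ler_sum_subpred => [s|s /andP[/tau_inst_in_ge0] //].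
by move=> /andP[/asboolP/(inst_in_subset sWW')/asboolP ->].
Qed.

Lemma card_in_inst_le s : is_instance src dst time mx my delta s ->
  (#|[set v | in_inst s v]| <= k)%N.
Proof.
move=> [_ [h [_ h_inj _]] _].
rewrite -(card_in_imset (f := h)) => [|x y]; last by rewrite !inE; apply: h_inj.
by apply: leq_trans (max_card _) _; rewrite card_ord.
Qed.

(* Each instance contributes its weight to the degree of at most k vertices. *)
Lemma sum_Cdeg_le (W : {set V}) : \sum_(w in W) Cdeg W w <= k%:R * tauW W.
Proof.
rewrite /Cdeg /tauW (exchange_big_dep (fun s => `[< inst_in W s >])) /=;
  last by move=> w s _ /andP[].
rewrite mulr_sumr; apply: ler_sum => s inW.
have tau_s_ge0 := tau_inst_in_ge0 inW.
apply: le_trans (ler_sum_subpred (Q := fun w => w \in [set v | in_inst s v]) _ _) _ => //.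
  by move=> w /and3P[_ _]; rewrite inE.
rewrite sumr_const -[leLHS]mulr_natl; apply: (ler_wpM2r tau_s_ge0); rewrite ler_nat.
exact/card_in_inst_le/(proj1 (asboolW inW)).
Qed.

Lemma tauW_setD1 (W : {set V}) v : tauW W = tauW (W :\ v) + Cdeg W v.
Proof.
rewrite /tauW /Cdeg (bigID (fun s => in_inst s v)) /= addrC; congr (_ + _).
apply: eq_bigl => s; apply/andP/asboolP => [[/asboolP[inst_s edges_in] v_notin]|].
  split=> // i; have [src_in dst_in] := edges_in i; rewrite !inE src_in dst_in !andbT.
  by split; apply: contraNneq v_notin => <-; apply/existsP; exists i; rewrite eqxx ?orbT.
move=> [inst_s edges_in]; split.
  apply/asboolP; split=> // i; have [] := edges_in i.
  by rewrite !inE => /andP[_ ->] /andP[_ ->].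
apply/existsP => -[i /orP[] /eqP endpoint_v]; have [] := edges_in i;
  by rewrite endpoint_v !inE eqxx.
Qed.

Hypothesis l_gt0 : (0 < l)%N.

Lemma tauW_set0 : tauW finset.set0 = 0.
Proof.
rewrite /tauW big_pred0 // => s; apply/asboolP => -[_ edges_in].
by have [] := edges_in (Ordinal l_gt0); rewrite inE.
Qed.

Lemma OPT_ge0 : 0 <= OPT.
Proof. exact: bigmax_ge_id. Qed.

Lemma rho_le_OPT (W : {set V}) : W != finset.set0 -> rho W <= OPT.
Proof. by move=> W_neq0; exact: (le_bigmax_cond _ rho W_neq0). Qed.

Lemma tauW_le_OPT (W : {set V}) : tauW W <= OPT * #|W|%:R.
Proof.
have [->|W_neq0] := eqVneq W finset.set0; first by rewrite tauW_set0 cards0 mulr0.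
by rewrite -ler_pdivrMr ?ltr0n ?card_gt0 ?rho_le_OPT.
Qed.

Lemma OPT_attained : 0 < OPT -> exists2 W, W != finset.set0 & rho W = OPT.
Proof.
rewrite /OPT; case: (pickP (fun W : {set V} => W != finset.set0)) => [W0 W0_neq0 _|none].
  have [W W_neq0 ->] :=
    eq_bigmax W0 (fun W : {set V} => W != finset.set0) rho W0_neq0 (fun W _ => rho_ge0 W).
  by exists W.
by rewrite big_pred0 // ltxx.
Qed.

Lemma Cdeg_densest_ge (Ws : {set V}) v :
  rho Ws = OPT -> v \in Ws -> OPT <= Cdeg Ws v.
Proof.
move=> rho_Ws v_in.
have Ws_neq0 : Ws != finset.set0 by apply/set0Pn; exists v.
have tauWs : tauW Ws = OPT * #|Ws|%:R.
  by rewrite -rho_Ws /rho divfK // pnatr_eq0 -lt0n card_gt0.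
have cardWs : #|Ws|%:R = 1 + #|Ws :\ v|%:R :> R by rewrite (cardsD1 v Ws) v_in natrD.
move: tauWs; rewrite (tauW_setD1 Ws v) cardWs mulrDr mulr1.
have := tauW_le_OPT (Ws :\ v); lra.
Qed.

Hypothesis k_gt0 : (0 < k)%N.

Lemma rho_ge_min_Cdeg (U : {set V}) c : U != finset.set0 ->
  (forall u, u \in U -> c <= Cdeg U u) -> c / k%:R <= rho U.
Proof.
move=> U_neq0 c_le; rewrite ler_pdivrMr ?ltr0n // mulrAC ler_pdivlMr ?ltr0n ?card_gt0 //.
rewrite [leRHS]mulrC mulr_natr -sumr_const; apply: le_trans (sum_Cdeg_le U).
exact: ler_sum.
Qed.

Lemma rho_ge_small_superset (Ws U : {set V}) : rho Ws = OPT -> Ws != finset.set0 ->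
  Ws \subset U -> (#|U| <= k)%N -> OPT / k%:R <= rho U.
Proof.
move=> rho_Ws Ws_neq0 sWsU U_small.
have U_gt0 : 0 < #|U|%:R :> R by rewrite ltr0n (leq_trans _ (subset_leq_card sWsU)) ?card_gt0.
have OPT_le_tauW : OPT <= tauW U.
  apply: le_trans (tauW_subset sWsU); rewrite -rho_Ws /rho ler_pdivrMr ?ltr0n ?card_gt0 //.
  by rewrite ler_peMr ?tauW_ge0 // ler1n card_gt0.
rewrite ler_pdivrMr ?ltr0n // mulrAC ler_pdivlMr //.
by apply: ler_pM; rewrite ?OPT_ge0 ?ler_nat.
Qed.

Lemma greedy_path_density (Ws : {set V}) : rho Ws = OPT -> Ws != finset.set0 ->
  forall (us : seq {set V}) (U0 : {set V}), Ws \subset U0 ->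
  path (greedy_step src dst time mx my delta tau) U0 us -> (#|last U0 us| <= k)%N ->
  exists2 U, U \in U0 :: us & OPT / k%:R <= rho U.
Proof.
move=> rho_Ws Ws_neq0; elim=> [|U1 us IH] U0 sWsU0 /=.
  by move=> _ U0_small; exists U0; rewrite ?mem_head ?(rho_ge_small_superset rho_Ws).
move=> /andP[/andP[_ /existsP[v /and3P[v_in /forallP v_min /eqP U1E]]] path_us] last_small.
have [v_Ws|v_notin_Ws] := boolP (v \in Ws).
  exists U0; first exact: mem_head.
  apply: rho_ge_min_Cdeg => [|u u_in]; first by apply/set0Pn; exists v.
  have v_le_u : Cdeg U0 v <= Cdeg U0 u by move: (v_min u); rewrite u_in.
  apply: le_trans v_le_u.
  exact: le_trans (Cdeg_densest_ge rho_Ws v_Ws) (Cdeg_subset v sWsU0).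
have sWsU1 : Ws \subset U1 by rewrite U1E subsetD1 sWsU0.
have [U U_in rho_U] := IH U1 sWsU1 path_us last_small.
by exists U; rewrite // in_cons U_in orbT.
Qed.

Section HybridPeel.
Variables (xi eps : R) (est : nat -> V -> R).

Local Notation W := (Wp k xi est).
Local Notation L i := (Lset k xi (W i) (est i)).
Local Notation score := (score k xi est).
Local Notation good_iter := (good_iter src dst time mx my delta tau xi eps est).

Lemma good_iter_bounds i w : good_iter i -> w \in W i ->
  (1 - eps) * Cdeg (W i) w <= est i w <= (1 + eps) * Cdeg (W i) w.
Proof.
move=> good w_in; have := good w w_in; rewrite ler_distl => /andP[lo hi].
by rewrite mulrBl mulrDl !mul1r lo hi.
Qed.

Lemma score_le_rho j : 0 <= eps -> good_iter j -> W j != finset.set0 ->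
  score j <= (1 + eps) * rho (W j).
Proof.
move=> eps_ge0 good Wj_neq0.
rewrite /score /rho /tau_hat mulrA ler_pM2r ?invr_gt0 ?ltr0n ?card_gt0 //.
rewrite ler_pdivrMl ?ltr0n // mulrCA.
have eps1_ge0 : 0 <= 1 + eps by lra.
apply: le_trans (ler_wpM2l eps1_ge0 (sum_Cdeg_le (W j))).
rewrite mulr_sumr; apply: ler_sum => w w_in.
by case/andP: (good_iter_bounds good w_in).
Qed.

Lemma score_ge_of_removed i (Ws : {set V}) v : 0 < xi -> eps <= 1 -> good_iter i ->
  rho Ws = OPT -> Ws \subset W i -> v \in Ws -> v \in L i ->
  (1 - eps) * OPT / (k%:R * (1 + xi)) <= score i.
Proof.
move=> xi_gt0 eps_le1 good rho_Ws sWsWi v_Ws; rewrite inE => /andP[v_Wi v_removed].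
have [est_v_ge _] := andP (good_iter_bounds good v_Wi).
have OPT_le_C : OPT <= Cdeg (W i) v.
  exact: le_trans (Cdeg_densest_ge rho_Ws v_Ws) (Cdeg_subset v sWsWi).
rewrite ler_pdivrMr ?mulr_gt0 ?ltr0n //; last lra.
rewrite -mulrA in v_removed; rewrite [leRHS]mulrC.
apply: le_trans (le_trans _ est_v_ge) v_removed.
by apply: ler_wpM2l => //; lra.
Qed.

Lemma densest_removed_or_kept (Ws : {set V}) n :
  (exists i, [/\ (1 <= i <= n)%N, Ws \subset W i & exists2 v, v \in Ws & v \in L i])
  \/ Ws \subset W n.+1.
Proof.
elim: n => [|n [[i [/andP[i_ge1 i_le] sWsWi removed]]|sWsWn]].
- by right; exact: finset.subsetT.
- by left; exists i; rewrite i_ge1 leqW.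
case: (pickP [pred v | (v \in Ws) && (v \in L n.+1)]) => [v /andP[v_Ws v_L]|none].
  by left; exists n.+1; split; [rewrite leqnn | | exists v].
right; rewrite [W n.+2]/= subsetD sWsWn /=; apply/pred0P => v /=.
by apply/andP => -[v_Ws v_L]; move: (none v); rewrite /= v_Ws v_L.
Qed.

Variable J : nat.
Local Notation iter_cand := (iter_cand k xi J est).
Local Notation greedy_result :=
  (greedy_result src dst time mx my delta tau xi J est).

Lemma some_candidate_ge Wg (Ws : {set V}) : 0 < xi -> 0 <= eps <= 1 ->
  rho Ws = OPT -> Ws != finset.set0 ->
  (forall i, (1 <= i <= J)%N -> good_iter i) -> greedy_result Wg ->
  let LB := (1 - eps) * OPT / (k%:R * (1 + xi)) in
  (exists2 i, iter_cand i & LB <= score i) \/ (exists2 W', Wg = Some W' & LB <= rho W').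
Proof.
move=> xi_gt0 /andP[eps_ge0 eps_le1] rho_Ws Ws_neq0 good greedy LB.
have [[i [i_range sWsWi [v v_Ws v_L]]]|sWsWJ] := densest_removed_or_kept Ws J.
  left; exists i; last exact: score_ge_of_removed (good i i_range) rho_Ws sWsWi v_Ws v_L.
  by split=> //; apply/set0Pn; exists v; exact: (fintype.subsetP sWsWi).
right; case: Wg greedy => [W'|WJ_eq0]; last first.
  by move: Ws_neq0; rewrite -finset.subset0 -WJ_eq0 sWsWJ.
move=> [_ [us [/andP[path_us last_small] W'_in W'_max]]]; exists W' => //.
have [U U_in rho_U] := greedy_path_density rho_Ws Ws_neq0 sWsWJ path_us last_small.
apply: le_trans (W'_max U U_in); apply: le_trans rho_U.
have := OPT_ge0; rewrite /LB ler_pdivrMr ?mulr_gt0 ?ltr0n //; last lra.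
rewrite mulrA divfK ?pnatr_eq0 -?lt0n //; nra.
Qed.

Lemma rho_output_ge Out : 0 < xi -> 0 < eps < 1 ->
  (forall i, (1 <= i <= J)%N -> good_iter i) ->
  is_output src dst time mx my delta tau xi J est Out ->
  (1 - eps) / (k%:R * (1 + xi) * (1 + eps)) * OPT <= rho Out.
Proof.
move=> xi_gt0 /andP[eps_gt0 eps_lt1] good [Wg [greedy out]].
have c_ge0 : 0 <= (1 - eps) / (k%:R * (1 + xi) * (1 + eps)).
  by rewrite divr_ge0 ?mulr_ge0 //; lra.
have [OPT_le0|OPT_gt0] := lerP OPT 0.
  exact: le_trans (mulr_ge0_le0 c_ge0 OPT_le0) (rho_ge0 Out).
have [Ws Ws_neq0 rho_Ws] := OPT_attained OPT_gt0.
set LB := (1 - eps) * OPT / (k%:R * (1 + xi)).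
have LB_eq : (1 - eps) / (k%:R * (1 + xi) * (1 + eps)) * OPT * (1 + eps) = LB.
  by rewrite /LB; field; rewrite !lt0r_neq0 ?mulr_gt0 ?ltr0n //; lra.
have eps_range : 0 <= eps <= 1 by apply/andP; split; lra.
have LB_le x : (forall j, iter_cand j -> score j <= x) ->
    (forall W', Wg = Some W' -> rho W' <= x) -> LB <= x.
  move=> score_le rho_le.
  have [[i cand_i LB_le]|[W' Wg_W' LB_le]] :=
    some_candidate_ge xi_gt0 eps_range rho_Ws Ws_neq0 good greedy.
  - exact: le_trans LB_le (score_le i cand_i).
  - exact: le_trans LB_le (rho_le W' Wg_W').
set q := _ * OPT in LB_eq *; have q_ge0 : 0 <= q := mulr_ge0 c_ge0 (ltW OPT_gt0).
move: out => /= -[[j [cand_j -> [score_le rho_le]]]|[_ [score_le rho_le]]].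
- have := score_le_rho (ltW eps_gt0) (good j (proj1 cand_j)) (proj2 cand_j).
  have := LB_le _ score_le rho_le; rewrite -LB_eq; nra.
- have := LB_le _ score_le rho_le; rewrite -LB_eq; nra.
Qed.

End HybridPeel.
End MotifDensity.

Local Open Scope classical_set_scope.

Section BooleanMeasurability.
Context d (Omega : measurableType d).
Implicit Types b : Omega -> bool.

Lemma measurable_bool_set b : measurable_fun setT b -> measurable [set om | b om].
Proof. by move=> mb; rewrite -[X in measurable X]setTI; exact: mb. Qed.

Lemma measurable_fun_eqb b (c : bool) :
  measurable_fun setT b -> measurable_fun setT (fun om => b om == c).
Proof.
move=> mb; case: c.
  by under eq_fun do rewrite eqb_id.
by under eq_fun do rewrite eqbF_neg; exact: measurable_neg.
Qed.

Lemma measurable_fun_all (I : Type) (s : seq I) (b : I -> Omega -> bool) :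
  (forall i, measurable_fun setT (b i)) ->
  measurable_fun setT (fun om => all (fun i => b i om) s).
Proof. by move=> mb; elim: s => //= i s IH; exact: measurable_and. Qed.

Lemma measurable_fun_has (I : Type) (s : seq I) (b : I -> Omega -> bool) :
  (forall i, measurable_fun setT (b i)) ->
  measurable_fun setT (fun om => has (fun i => b i om) s).
Proof. by move=> mb; elim: s => //= i s IH; exact: measurable_or. Qed.

(* [g (f om) om] is a finite disjunction over the values of [f]. *)
Lemma measurable_fun_fin_case (T : finType) (f : Omega -> T) (g : T -> Omega -> bool) :
  (forall t, measurable_fun setT (fun om => f om == t)) ->
  (forall t, measurable_fun setT (g t)) ->
  measurable_fun setT (fun om => g (f om) om).
Proof.
move=> mf mg; rewrite (_ : (fun om => _) =
    fun om => has (fun t => (f om == t) && g t om) (enum T)).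
  by apply: measurable_fun_has => t; exact: measurable_and.
apply/funext => om; apply/idP/hasP => [g_fom|[t _ /andP[/eqP-> //]]].
by exists (f om); rewrite ?mem_enum ?eqxx.
Qed.

Lemma measurable_fun_eqset (V : finType) (S : Omega -> {set V}) (W : {set V}) :
  (forall w, measurable_fun setT (fun om => w \in S om)) ->
  measurable_fun setT (fun om => S om == W).
Proof.
move=> mS; rewrite (_ : (fun om => _) =
    fun om => all (fun w => (w \in S om) == (w \in W)) (enum V)).
  by apply: measurable_fun_all => w; exact: measurable_fun_eqb.
apply/funext => om; apply/eqP/allP => [->|S_eq]; first by move=> w _.
by apply/setP => w; apply/eqP/S_eq; rewrite mem_enum.
Qed.

End BooleanMeasurability.

Section HybridPeelMeasurability.
Context d (Omega : measurableType d) (R : realType) (V : finType) (m : nat).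
Variables (src dst : 'I_m -> V) (time : 'I_m -> R).
Variables (k l : nat) (mx my : 'I_l -> 'I_k) (delta : R).
Variables (tau : {ffun 'I_l -> 'I_m} -> R) (xi eps : R).
Variable est : Omega -> nat -> V -> R.
Hypothesis est_measurable : forall i w, measurable_fun setT (fun om => est om i w).

Local Notation W om := (Wp k xi (est om)).

Lemma measurable_fun_Lset_mem i (U : {set V}) w :
  measurable_fun setT (fun om => w \in Lset k xi U (est om i)).
Proof.
rewrite /Lset /tau_hat; under eq_fun do rewrite inE -big_filter.
apply: measurable_and => //; apply: measurable_fun_ler => //.
do 3!apply: measurable_funM => //; exact: measurable_sum.
Qed.

Lemma measurable_fun_Wp_eq i (U : {set V}) :
  measurable_fun setT (fun om => W om i == U).
Proof.
elim: i U => [|[|i] IH] U; try exact: measurable_cst ([set: V]%SET == U).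
apply: (measurable_fun_fin_case (f := fun om => W om i.+1)
  (g := fun U' om => U' :\: Lset k xi U' (est om i.+1) == U)) => // U'.
apply: measurable_fun_eqset => w; under eq_fun do rewrite inE.
by apply: measurable_and => //; apply: measurable_neg; exact: measurable_fun_Lset_mem.
Qed.

Lemma measurable_good_iter i :
  measurable [set om | good_iter src dst time mx my delta tau xi eps (est om) i].
Proof.
pose good_on (U : {set V}) om := all (fun w => (w \in U) ==>
  (`|est om i w - Cdeg src dst time mx my delta tau U w|
     <= eps * Cdeg src dst time mx my delta tau U w)) (enum V).
rewrite (_ : [set om | _] = [set om | good_on (W om i) om]).
  apply/measurable_bool_set/measurable_fun_fin_case => [U|U].
    exact: measurable_fun_Wp_eq.
  apply: measurable_fun_all => w; case: (w \in U); last exact: measurable_cst.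
  apply: measurable_fun_ler => //; apply: measurableT_comp => //.
  exact: measurable_funB.
apply/seteqP; split=> om /= good.
  by apply/allP => w _; apply/implyP; exact: good.
by move=> w w_in; move/allP: good => /(_ w (mem_enum _ _)); rewrite w_in.
Qed.

End HybridPeelMeasurability.

Section UnionBound.
Context d (Omega : measurableType d) (R : realType) (P : probability Omega R).
Local Open Scope ereal_scope.

Lemma probability_setI_ge (A B : set Omega) (x y : R) :
  measurable A -> measurable B -> x%:E <= P A -> y%:E <= P B ->
  (x + y - 1)%:E <= P (A `&` B).
Proof.
move=> mA mB.
have mAB := measurableI _ _ mA mB; have mAuB := measurableU _ _ mA mB.
have PE U : measurable U -> P U = (fine (P U))%:E.
  by move=> mU; rewrite fineK // fin_num_measure.
have : P (A `|` B) = P A + P B - P (A `&` B).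
  exact: measureUfinl (le_lt_trans (probability_le1 P mA) (ltry 1)).
have := probability_le1 P mAuB.
rewrite (PE _ mA) (PE _ mB) (PE _ mAB) (PE _ mAuB) -EFinD !lee_fin.
by move=> PU_le1 [PU_eq]; lra.
Qed.

Lemma probability_bigcap_ge (G : nat -> set Omega) (c : R) n :
  (forall i, measurable (G i)) ->
  (forall i, (1 <= i <= n)%N -> (1 - c)%:E <= P (G i)) ->
  let H := [set om | forall i, (1 <= i <= n)%N -> G i om] in
  measurable H /\ (1 - n%:R * c)%:E <= P H.
Proof.
move=> mG PG_ge; elim: n PG_ge => [|n IH] PG_ge H.
  rewrite (_ : H = setT); last by apply/seteqP; split=> // om _ i /andP[/leq_trans/[apply]].
  by rewrite probability_setT mul0r subr0.
have [|mHn PHn_ge] := IH.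
  by move=> i /andP[i_ge1 i_le]; apply: PG_ge; rewrite i_ge1 leqW.
have -> : H = [set om | forall i, (1 <= i <= n)%N -> G i om] `&` G n.+1.
  apply/seteqP; split=> om /=.
    move=> in_all; split=> [i /andP[i_ge1 i_le]|]; apply: in_all.
      by rewrite i_ge1 leqW.
    by rewrite leqnn.
  move=> [in_n in_last] i /andP[i_ge1]; rewrite leq_eqVlt => /orP[/eqP-> //|].
  by rewrite ltnS => i_le; apply: in_n; rewrite i_ge1.
split; first exact: measurableI.
apply: le_trans (probability_setI_ge mHn (mG n.+1) PHn_ge (PG_ge _ _)).
  by rewrite lee_fin -natr1; lra.
by rewrite leqnn.
Qed.

End UnionBound.

Lemma approx_factor_le (R : realFieldType) (a eps : R) n :
  0 < a -> 0 < eps < 1 -> (0 < n)%N ->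
  (1 - eps) ^+ 2 / (a * (1 + eps) ^+ n) <= (1 - eps) / (a * (1 + eps)).
Proof.
move=> a_gt0 /andP[eps_gt0 eps_lt1] n_gt0.
have [eps1_gt0 eps2_gt0] : 0 < 1 - eps /\ 0 < 1 + eps by split; lra.
rewrite ler_pdivrMr ?mulr_gt0 ?exprn_gt0 // mulrAC ler_pdivlMr ?mulr_gt0 //.
apply: ler_pM.
- exact/exprn_ge0/ltW.
- exact/ltW/mulr_gt0.
- by rewrite expr2 ler_piMr ?ltW //; lra.
- by rewrite ler_pM2l // ler_eXnr //; lra.
Qed.

Unset Implicit Arguments.
Theorem theorem4p2
  (R : realType) (V : finType) (m : nat)
  (src dst : 'I_m -> V) (time : 'I_m -> R)
  (k l : nat) (mx my : 'I_l -> 'I_k) (delta : R)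
  (tau : {ffun 'I_l -> 'I_m} -> R)
  (xi eps eta : R) (J : nat)
  (d : measure_display) (Omega : measurableType d) (P : probability Omega R)
  (F : nat -> set (set Omega))
  (est : Omega -> nat -> V -> R) (Out : Omega -> {set V}) :
  (* temporal network: positive, distinct timestamps *)
  (forall e, 0 < time e) -> injective time ->
  (* motif *)
  (2 <= k)%N -> (2 <= l)%N -> motif_weakly_connected mx my ->
  0 < delta ->
  (* weighting function *)
  (forall s, is_instance src dst time mx my delta s -> 0 < tau s) ->
  (* parameters *)
  0 < xi -> 0 < eps < 1 -> 0 < eta < 1 -> (1 <= J)%N ->
  (* filtration: F i = information available after iteration i *)
  (forall i, sigma_algebra setT (F i)) ->
  (forall i, F i `<=` measurable) ->
  (forall i, F i `<=` F i.+1) ->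
  (forall i w (B : set R), measurable B -> F i [set om | B (est om i w)]) ->
  (* estimates are nonnegative *)
  (forall om i w, (1 <= i <= J)%N ->
      w \in Wp k xi (est om) i -> 0 <= est om i w) ->
  (* conditional accuracy guarantee of each iteration *)
  (forall i, (1 <= i <= J)%N -> forall A, F i.-1 A ->
     ((1 - eta / J%:R)%:E * P A <=
        P ([set om | good_iter src dst time mx my delta tau xi eps (est om) i]
           `&` A))%E) ->
  (* Out om is an output of HybridPeel run with the estimates est om *)
  (forall om,
     is_output src dst time mx my delta tau xi J (est om) (Out om)) ->
  exists A : set Omega,
    [/\ measurable A, ((1 - eta)%:E <= P A)%E &
        forall om, A om ->
          (if (2 <= J)%N
           then (1 - eps) ^+ 2 / (k%:R * (1 + xi) * (1 + eps) ^+ 2)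
           else (1 - eps) ^+ 2 / (k%:R * (1 + xi) * (1 + eps)))
          * OPT src dst time mx my delta tau
          <= rho src dst time mx my delta tau (Out om)].
Proof.
move=> _ _ k_ge2 l_ge2 _ _ tau_gt0 xi_gt0 eps_range _ J_ge1 F_sigma F_meas _ est_F _
  accurate output.
(* Only the unconditional case [A = setT] of the accuracy guarantee is used:
   the union bound needs no independence between iterations. *)
pose good i := [set om | good_iter src dst time mx my delta tau xi eps (est om) i].
have est_meas i w : measurable_fun setT (fun om => est om i w).
  by move=> _ B mB; rewrite setTI; exact/F_meas/est_F.
have good_prob i : (1 <= i <= J)%N -> ((1 - eta / J%:R)%:E <= P (good i))%E.
  move=> i_range; have [F0 FC _] := F_sigma i.-1.
  have := accurate i i_range setT; rewrite probability_setT mule1 setIT; apply.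
  by rewrite -(setD0 setT); exact: FC.
have [meas_all prob_all] :=
  probability_bigcap_ge (measurable_good_iter src dst time mx my delta tau xi eps est_meas)
    good_prob.
exists [set om | forall i, (1 <= i <= J)%N -> good i om]; split=> // [|om all_good].
  by rewrite mulrC divfK ?pnatr_eq0 -?lt0n in prob_all.
have k_gt0 : (0 < k)%N by exact: leq_trans k_ge2.
apply: le_trans (rho_output_ge tau_gt0 (leq_trans _ l_ge2) k_gt0 xi_gt0 eps_range
  all_good (output om)) => //.
apply: ler_wpM2r; first exact: OPT_ge0.
have ka_gt0 : 0 < k%:R * (1 + xi) by rewrite mulr_gt0 ?ltr0n //; lra.
by case: ifP => _; [exact: (approx_factor_le (n := 2)) | exact: (approx_factor_le (n := 1))].
Qed.
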